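(* Let $1\le p<\infty$, $N\ge2$, and let $T_i=T_{f_i,\omega^{(i)}}$ ($1\le i\le N$) be unilateral pseudo-shifts on $\ell^p(\mathbb{N})$. Then $T_1,\dots,T_N$ are s-hypercyclic if and only if they are densely s-hypercyclic.
   Context: $\{e_m\}$ is the canonical basis of $\ell^p(\mathbb{N})$ over $\mathbb{K}\in\{\mathbb{R},\mathbb{C}\}$. For a strictly increasing $f:\mathbb{N}\to\mathbb{N}$ with $f(1)>1$ and a bounded, nonzero sequence of scalars $\omega=(w_{f(m)})_m$, $T_{f,\omega}(\sum_m\alpha_me_m)=\sum_mw_{f(m)}\alpha_{f(m)}e_m$. A vector $x$ is s-hypercyclic for operators $T_1,\dots,T_N$ on $X$ if the closure of $\{(T_1^nx,\dots,T_N^nx):n\in\mathbb{N}\}$ contains the diagonal $\{(y,\dots,y):y\in X\}$ of $\oplus_{i=1}^NX$; the operators are s-hypercyclic if such $x$ exists, and densely s-hypercyclic if the set of such $x$ is dense. *)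

From HB Require Import structures.
From mathcomp Require Import all_boot all_order all_algebra.
From mathcomp Require Import all_classical all_reals all_analysis.
From mathcomp Require Import complex.
Set Implicit Arguments. Unset Strict Implicit. Unset Printing Implicit Defensive.
Import Order.TTheory GRing.Theory Num.Theory numFieldTopology.Exports numFieldNormedType.Exports.
Local Open Scope ring_scope.

(* Sequences are indexed by nat = {0,1,2,...}; the paper's e_m (m >= 1)
   corresponds to index m-1 here.  Scalars live in K, with a modulus
   nrm : K -> R (|.| for K = R, the complex modulus for K = R[i]). *)
Section Lp.
Variables (R : realType) (K : pzRingType) (nrm : K -> R) (p : R).

Definition lp_psum (x : nat -> K) : nat -> R :=
  series (fun m => nrm (x m) `^ p).

Definition lp_mem (x : nat -> K) : Prop := cvgn (lp_psum x).

Definition lp_norm (x : nat -> K) : R := (limn (lp_psum x)) `^ p^-1.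

Definition lp_dist (x y : nat -> K) : R := lp_norm (fun m => x m - y m).

(* x is an s-hypercyclic vector for T_0,...,T_{N-1} on l^p: the closure of
   {(T_0^n x, ..., T_{N-1}^n x) : n >= 1} in the direct sum contains the
   diagonal; i.e. every diagonal point (y,...,y), y in l^p, is approximated
   (in the product topology) by orbit points. *)
Definition s_hypercyclic_vector (N : nat) (T : 'I_N -> (nat -> K) -> (nat -> K))
    (x : nat -> K) : Prop :=
  lp_mem x /\
  forall y, lp_mem y -> forall e : R, 0 < e ->
    exists n : nat, (0 < n)%N /\ forall i : 'I_N, lp_dist (iter n (T i) x) y < e.

Definition s_hypercyclic (N : nat) (T : 'I_N -> (nat -> K) -> (nat -> K)) : Prop :=
  exists x, s_hypercyclic_vector T x.

Definition densely_s_hypercyclic (N : nat) (T : 'I_N -> (nat -> K) -> (nat -> K)) : Prop :=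
  forall z, lp_mem z -> forall e : R, 0 < e ->
    exists x, s_hypercyclic_vector T x /\ lp_dist x z < e.

End Lp.

(* Unilateral weighted pseudo-shift T_{f,w} (sum_m a_m e_m) = sum_m w_m a_{f(m)} e_m,
   where w m stands for the paper's w_{f(m)}. *)
Definition pseudo_shift (K : pzRingType) (f : nat -> nat) (w : nat -> K)
    (x : nat -> K) : nat -> K :=
  fun m => w m * x (f m).

(* Admissible data: f strictly increasing with f(1) > 1 (0-based: f 0 > 0),
   w a bounded sequence of nonzero scalars. *)
Definition pseudo_shift_data (R : realType) (K : pzRingType) (nrm : K -> R)
    (f : nat -> nat) (w : nat -> K) : Prop :=
  {homo f : m n / (m < n)%N} /\ (0 < f 0%N)%N /\
  (forall m, w m != 0) /\ (exists M : R, forall m, nrm (w m) <= M).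

Definition cmod (R : realType) (z : R[i]) : R := ComplexField.Normc.normc z.

From HB Require Import structures.
From mathcomp Require Import all_boot all_order all_algebra.
From mathcomp Require Import all_classical all_reals all_analysis.
From mathcomp Require Import complex.
From mathcomp Require Import lra.
Set Implicit Arguments.
Unset Strict Implicit.
Unset Printing Implicit Defensive.
Import Order.TTheory GRing.Theory Num.Theory numFieldTopology.Exports numFieldNormedType.Exports.
Local Open Scope classical_set_scope.
Local Open Scope ring_scope.

(* The m-th coordinate of [T^n x] only involves coordinates of [x] of index at
   least [m + n] (as [j < f j]).  Hence modifying finitely many coordinates of an
   s-hypercyclic vector [x] keeps it s-hypercyclic, provided the approximation
   times [n] can be taken arbitrarily large.  They can: pick a coordinate [k] at
   which the first [L] iterates [T^j x] are all within [e/8] of the target [y]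
   (each [T^j x - y] lies in l^p) and [t] with [|t| = e/4]; an [n] for which all
   [T_i^n x] lie within [e/8] of [y + t e_k] must satisfy [n >= L], and these
   [T_i^n x] lie within [e] of [y].  Given [z], the vector equal to [z] on
   [[0, L)] and to [x] afterwards is therefore s-hypercyclic, and it is close to
   [z] once the tail of [x - z] beyond [L] is small. *)

Section PowR.
Variable R : realType.
Implicit Types r u v : R.

Lemma ler_powR2r r u v : 0 < r -> 0 <= u -> 0 <= v -> (u `^ r <= v `^ r) = (u <= v).
Proof.
move=> r_gt0 u_ge0 v_ge0; apply/idP/idP; last by apply: ge0_ler_powR; rewrite ?nnegrE // ltW.
by apply: contraTT; rewrite -!ltNge; apply: gt0_ltr_powR; rewrite ?nnegrE.
Qed.

Lemma ltr_powR2r r u v : 0 < r -> 0 <= u -> 0 <= v -> (u `^ r < v `^ r) = (u < v).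
Proof. by move=> r_gt0 u_ge0 v_ge0; rewrite !ltNge ler_powR2r. Qed.

Lemma powRD_le r u v : 0 <= r -> 0 <= u -> 0 <= v ->
  (u + v) `^ r <= 2 `^ r * (u `^ r + v `^ r).
Proof.
move=> r_ge0; wlog uv : u v / u <= v => [H u_ge0 v_ge0|u_ge0 v_ge0].
  have [/H|/ltW/H] := leP u v; first exact.
  by rewrite addrC [u `^ r + _]addrC; exact.
apply: (@le_trans _ _ ((2 * v) `^ r)).
  apply: ge0_ler_powR; rewrite ?nnegrE ?addr_ge0 ?mulr_ge0 //.
  by rewrite mulr2n mulrDl mul1r lerD2r.
by rewrite powRM // ler_wpM2l ?powR_ge0 // lerDr powR_ge0.
Qed.

End PowR.

Lemma ltn_homo_id (f : nat -> nat) :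
  {homo f : m n / (m < n)%N} -> (0 < f 0)%N -> forall n, (n < f n)%N.
Proof. by move=> f_incr f0_gt0; elim=> // n ih; exact: leq_ltn_trans ih (f_incr _ _ _). Qed.

Lemma ler_sum_homo_ltn (R : numFieldType) (g : nat -> R) (f : nat -> nat) :
  (forall j, 0 <= g j) -> {homo f : m n / (m < n)%N} ->
  forall n, \sum_(0 <= m < n) g (f m) <= \sum_(0 <= j < f n) g j.
Proof.
move=> g_ge0 f_incr; elim=> [|n ih]; first by rewrite big_geq // sumr_ge0.
rewrite big_nat_recr //= (le_trans (lerD ih (lexx _))) // -big_nat_recr //=.
by apply: (@nondecreasing_series _ g xpredT 0%N) => //; exact: f_incr.
Qed.

Lemma iter_pseudo_shift_eq_from (K : pzRingType) (f : nat -> nat) (w : nat -> K) n L x x' :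
  {homo f : m n / (m < n)%N} -> (0 < f 0)%N -> (L <= n)%N ->
  (forall m, (L <= m)%N -> x m = x' m) ->
  iter n (pseudo_shift f w) x = iter n (pseudo_shift f w) x'.
Proof.
move=> f_incr f0_gt0; elim: n L x x' => [|n ih] L x x' Ln xx'.
  by apply/funext => m; apply: xx'; exact: leq_trans Ln _.
rewrite !iterSr; apply: (ih L.-1) => [|m Lm]; first by case: (L) Ln.
rewrite /pseudo_shift xx' //; apply: leq_trans (ltn_homo_id f_incr f0_gt0 m).
by case: (L) Lm.
Qed.

Definition add_coord (K : zmodType) (y : nat -> K) (k : nat) (t : K) : nat -> K :=
  fun m => if m == k then y m + t else y m.

Section LpSequences.
Variables (R : realType) (K : pzRingType) (nrm : K -> R) (p : R).
Hypotheses (p_gt0 : 0 < p) (nrm_ge0 : forall a, 0 <= nrm a) (nrm0 : nrm 0 = 0)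
  (ler_nrmD : forall a b, nrm (a + b) <= nrm a + nrm b)
  (nrmN : forall a, nrm (- a) = nrm a) (nrmM : forall a b, nrm (a * b) = nrm a * nrm b)
  (nrm_surj : forall r, 0 <= r -> exists t, nrm t = r).

Local Notation psum := (lp_psum nrm p).
Local Notation lp := (lp_mem nrm p).
Local Notation dist := (lp_dist nrm p).

Lemma ler_nrmB a b : nrm (a - b) <= nrm a + nrm b.
Proof. by rewrite -(nrmN b) ler_nrmD. Qed.

Lemma lp_psum_ge0 x n : 0 <= psum x n.
Proof. by apply: sumr_ge0 => m _; exact: powR_ge0. Qed.

Lemma lp_psum_nondecreasing x : {homo psum x : n m / (n <= m)%N >-> n <= m}.
Proof. by apply: (@nondecreasing_series _ _ xpredT 0%N) => m _ _; exact: powR_ge0. Qed.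

Lemma lp_psum_le_lim x n : lp x -> psum x n <= limn (psum x).
Proof. by move=> lpx; exact: nondecreasing_cvgn_le (lp_psum_nondecreasing x) lpx n. Qed.

Lemma lp_lim_ge0 x : lp x -> 0 <= limn (psum x).
Proof. by move=> lpx; exact: le_trans (lp_psum_ge0 x 0) (lp_psum_le_lim 0 lpx). Qed.

Lemma nrm_powR_le_lp_lim x k : lp x -> nrm (x k) `^ p <= limn (psum x).
Proof.
move=> lpx; apply: le_trans (lp_psum_le_lim k.+1 lpx).
by rewrite /lp_psum seriesSr lerDr lp_psum_ge0.
Qed.

Lemma lp_mem_bounded x M : (forall n, psum x n <= M) -> lp x.
Proof.
move=> psum_le; apply: nondecreasing_is_cvgn; first exact: lp_psum_nondecreasing.
by exists M => _ [n _ <-].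
Qed.

Lemma lp_lim_le x M : lp x -> (forall n, psum x n <= M) -> limn (psum x) <= M.
Proof. by move=> lpx psum_le; apply: limr_le => //; exact: nearW. Qed.

Lemma lp_tail_lt x eps : 0 < eps -> lp x -> exists L, limn (psum x) - psum x L < eps.
Proof.
move=> eps_gt0 lpx.
have [L _ /(_ L (leqnn L)) /= lt_eps] := (cvgrPdist_lt _ _).1 lpx eps eps_gt0.
by exists L; exact: le_lt_trans (ler_norm _) lt_eps.
Qed.

Lemma lp_psum_eq0 x L : (forall m, (m < L)%N -> x m = 0) -> psum x L = 0.
Proof.
move=> x0; rewrite /lp_psum /series /= big_nat big1 // => m /andP[_ mL].
by rewrite x0 // nrm0 powR0 // gt_eqF.
Qed.

Lemma lp_mem0 : lp (fun=> 0).
Proof. by apply: (@lp_mem_bounded _ 0) => n; rewrite lp_psum_eq0. Qed.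

Lemma lp_memB x y : lp x -> lp y -> lp (fun m => x m - y m).
Proof.
move=> lpx lpy.
apply: (@lp_mem_bounded _ (2 `^ p * (limn (psum x) + limn (psum y)))) => n.
apply: (@le_trans _ _ (2 `^ p * (psum x n + psum y n))); last first.
  by rewrite ler_wpM2l ?powR_ge0 // lerD // lp_psum_le_lim.
rewrite /lp_psum /series /= -big_split big_distrr /=; apply: ler_sum => m _.
apply: le_trans (powRD_le (ltW p_gt0) (nrm_ge0 _) (nrm_ge0 _)).
by rewrite ler_powR2r ?addr_ge0 ?ler_nrmB.
Qed.

(* Both sides equal [psum x L] plus the common block [L <= m < L + n]. *)
Lemma lp_psum_eq_from x y L n : (forall m, (L <= m)%N -> x m = y m) ->
  psum x n + psum y L <= psum x L + psum y (L + n).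
Proof.
move=> xy; apply: (@le_trans _ _ (psum x (L + n) + psum y L)).
  by rewrite lerD2r lp_psum_nondecreasing // leq_addl.
rewrite /lp_psum /series /= !(@big_cat_nat _ _ _ L 0 (L + n)) ?leq_addr //=.
have -> : \sum_(L <= m < L + n) nrm (x m) `^ p = \sum_(L <= m < L + n) nrm (y m) `^ p.
  by apply: eq_big_nat => m /andP[Lm _]; rewrite xy.
by rewrite addrAC -addrA.
Qed.

Lemma lp_mem_eq_from x y L : (forall m, (L <= m)%N -> x m = y m) -> lp y -> lp x.
Proof.
move=> xy lpy; apply: (@lp_mem_bounded _ (psum x L + limn (psum y))) => n.
have := lp_psum_eq_from n xy; have := lp_psum_le_lim (L + n) lpy.
have := lp_psum_ge0 y L; lra.
Qed.

Lemma lp_lim_eq_from x y L : (forall m, (L <= m)%N -> x m = y m) -> lp y ->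
  limn (psum x) <= psum x L + (limn (psum y) - psum y L).
Proof.
move=> xy lpy; apply: lp_lim_le (lp_mem_eq_from xy lpy) _ => n.
have := lp_psum_eq_from n xy; have := lp_psum_le_lim (L + n) lpy; lra.
Qed.

Lemma lp_lim_update x y k : (forall m, m != k -> x m = y m) -> lp x -> lp y ->
  limn (psum x) <= limn (psum y) + nrm (x k) `^ p.
Proof.
move=> xy lpx lpy; apply: lp_lim_le => // n.
apply: (@le_trans _ _ (psum y n + nrm (x k) `^ p)); last by rewrite lerD2r lp_psum_le_lim.
apply: (@le_trans _ _
    (\sum_(0 <= m < n) (nrm (y m) `^ p + (if m == k then nrm (x k) `^ p else 0)))).
  by apply: ler_sum => m _; case: eqVneq => [->|/xy ->]; rewrite ?lerDr ?powR_ge0 ?addr0.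
rewrite big_split /= lerD2l -big_mkcond big_nat1_eq.
by case: ifP => // _; exact: powR_ge0.
Qed.

Lemma lp_dist_ltE x y e : 0 < e -> lp x -> lp y ->
  (dist x y < e) = (limn (psum (fun m => x m - y m)) < e `^ p).
Proof.
move=> e_gt0 lpx lpy; rewrite /lp_dist /lp_norm -(ltr_powR2r p_gt0) ?powR_ge0 ?ltW //.
by rewrite -powRrM mulVf ?gt_eqF // powRr1 //; exact/lp_lim_ge0/lp_memB.
Qed.

Lemma lp_dist_coord_lt x y e k : lp x -> lp y -> dist x y < e -> nrm (x k - y k) < e.
Proof.
move=> lpx lpy lt_e; have e_gt0 : 0 < e := le_lt_trans (powR_ge0 _ _) lt_e.
move: lt_e; rewrite lp_dist_ltE // -(ltr_powR2r p_gt0) ?(ltW e_gt0) //.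
exact/le_lt_trans/nrm_powR_le_lp_lim/lp_memB.
Qed.

Lemma lp_common_small_coord (v : nat -> nat -> K) L eps : 0 < eps -> (forall j, lp (v j)) ->
  exists k, forall j, (j < L)%N -> nrm (v j k) < eps.
Proof.
move=> eps_gt0 lpv.
have small (j : 'I_L) : \forall k \near \oo, nrm (v j k) < eps.
  have := @cvgr0_norm_lt _ _ _ _ eventually_filter _
    (cvg_series_cvg_0 (lpv j)) _ (powR_gt0 p eps_gt0).
  by apply: filterS => k /=; rewrite ger0_norm ?powR_ge0 // ltr_powR2r ?(ltW eps_gt0).
have [k _ /(_ k (leqnn k)) small_k] := filter_forall eventually_filter small.
by exists k => j jL; exact: (small_k (Ordinal jL)).
Qed.

Lemma lp_mem_add_coord y k t : lp y -> lp (add_coord y k t).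
Proof. by apply: (lp_mem_eq_from (L := k.+1)) => m km; rewrite /add_coord gtn_eqF. Qed.

Lemma add_coord_far u y k t d : lp u -> lp y -> 2 * d <= nrm t ->
  dist u (add_coord y k t) < d -> d < nrm (u k - y k).
Proof.
move=> lpu lpy le_t /(lp_dist_coord_lt k lpu (lp_mem_add_coord (k := k) (t := t) lpy)).
rewrite /add_coord eqxx => near_t.
have tE : (u k - y k) - (u k - (y k + t)) = t.
  by rewrite opprB addrC addrA subrK addrAC subrr add0r.
have := ler_nrmB (u k - y k) (u k - (y k + t)); rewrite tE; lra.
Qed.

Lemma lp_dist_add_coord_lt u y k t e : 1 <= p -> 0 < e -> nrm t <= e / 4 ->
  lp u -> lp y -> dist u (add_coord y k t) < e / 8 -> dist u y < e.
Proof.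
move=> p_ge1 e_gt0 le_t lpu lpy lt_e8.
have lpy' := lp_mem_add_coord (k := k) (t := t) lpy.
have uk : nrm (u k - y k) <= e / 2.
  have := lp_dist_coord_lt k lpu lpy' lt_e8; rewrite /add_coord eqxx.
  have ukE : (u k - (y k + t)) + t = u k - y k by rewrite opprD addrA subrK.
  have := ler_nrmD (u k - (y k + t)) t; rewrite ukE; lra.
have lim_le : limn (psum (fun m => u m - y m)) <=
    limn (psum (fun m => u m - add_coord y k t m)) + nrm (u k - y k) `^ p.
  apply: lp_lim_update (lp_memB lpu lpy) (lp_memB lpu lpy') => m /negPf mk.
  by rewrite /add_coord mk.
rewrite lp_dist_ltE // in lt_e8; last by rewrite divr_gt0.
rewrite lp_dist_ltE //.
have e8 : (e / 8) `^ p <= 8^-1 * e `^ p.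
  by rewrite mulrC ge1r_powRZ ?(ltW e_gt0) //; apply/andP; split; lra.
have e2 : nrm (u k - y k) `^ p <= 2^-1 * e `^ p.
  apply: le_trans (_ : (2^-1 * e) `^ p <= _).
    by rewrite ler_powR2r // ?mulr_ge0 ?(ltW e_gt0) //; lra.
  by rewrite ge1r_powRZ ?(ltW e_gt0) //; apply/andP; split; lra.
have := powR_gt0 p e_gt0; lra.
Qed.

Lemma s_hypercyclic_vector_iter_ge N (T : 'I_N -> (nat -> K) -> nat -> K) (i0 : 'I_N)
    x y e L :
  1 <= p -> (forall i z, lp z -> lp (T i z)) -> s_hypercyclic_vector nrm p T x ->
  lp y -> 0 < e -> exists n, (L <= n)%N /\ forall i, dist (iter n (T i) x) y < e.
Proof.
move=> p_ge1 lpT [lpx hx] lpy e_gt0.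
have lp_iter i n : lp (iter n (T i) x).
  by elim: n => [|n ih]; [exact: lpx | exact: lpT].
have [t nrm_t] := nrm_surj (ltW (divr_gt0 e_gt0 (ltr0n _ 4))).
have e8_gt0 : 0 < e / 8 by rewrite divr_gt0.
have [k near_y] := lp_common_small_coord L e8_gt0 (fun j => lp_memB (lp_iter i0 j) lpy).
have [n [_ hn]] := hx _ (lp_mem_add_coord (k := k) (t := t) lpy) _ e8_gt0.
exists n; split => [|i]; last first.
  by apply: lp_dist_add_coord_lt p_ge1 e_gt0 _ (lp_iter i n) lpy (hn i); rewrite nrm_t.
rewrite leqNgt; apply/negP => /near_y /= near_n.
have t_ge : 2 * (e / 8) <= nrm t by rewrite nrm_t; lra.
have := add_coord_far (lp_iter i0 n) lpy t_ge (hn i0); lra.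
Qed.

Lemma lp_mem_pseudo_shift f w x : pseudo_shift_data nrm f w -> lp x ->
  lp (pseudo_shift f w x).
Proof.
move=> [f_incr [_ [_ [M le_M]]]] lpx.
have M_ge0 : 0 <= M := le_trans (nrm_ge0 _) (le_M 0%N).
apply: (@lp_mem_bounded _ (M `^ p * limn (psum x))) => n.
apply: (@le_trans _ _ (M `^ p * \sum_(0 <= m < n) nrm (x (f m)) `^ p)).
  rewrite /lp_psum /series /= big_distrr /=; apply: ler_sum => m _.
  by rewrite /pseudo_shift nrmM powRM // ler_wpM2r ?powR_ge0 // ler_powR2r.
rewrite ler_wpM2l ?powR_ge0 //; apply: le_trans (lp_psum_le_lim (f n) lpx).
by apply: ler_sum_homo_ltn => // j; exact: powR_ge0.
Qed.

Section PseudoShifts.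
Variables (N : nat) (f : 'I_N -> nat -> nat) (w : 'I_N -> nat -> K).
Hypothesis shift_data : forall i, pseudo_shift_data nrm (f i) (w i).

Local Notation T := (fun i => pseudo_shift (f i) (w i)).

Lemma s_hypercyclic_vector_pseudo_shift_eq_from (i0 : 'I_N) x x' L :
  1 <= p -> (forall m, (L <= m)%N -> x' m = x m) ->
  s_hypercyclic_vector nrm p T x -> s_hypercyclic_vector nrm p T x'.
Proof.
move=> p_ge1 x'x hx; split; first exact: lp_mem_eq_from x'x hx.1.
move=> y lpy e e_gt0.
have lpT i z : lp z -> lp (T i z) by exact: lp_mem_pseudo_shift.
have [n [Ln hn]] := s_hypercyclic_vector_iter_ge i0 L.+1 p_ge1 lpT hx lpy e_gt0.
exists n; split => [|i]; first exact: leq_ltn_trans Ln.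
have [f_incr [f0_gt0 _]] := shift_data i.
by rewrite (iter_pseudo_shift_eq_from _ f_incr f0_gt0 (ltnW Ln) x'x).
Qed.

Lemma s_hypercyclic_pseudo_shiftsP : (0 < N)%N -> 1 <= p ->
  s_hypercyclic nrm p T <-> densely_s_hypercyclic nrm p T.
Proof.
move=> N_gt0 p_ge1; split=> [[x hx] z lpz e e_gt0|]; last first.
  by move=> /(_ _ lp_mem0 1 ltr01) [x [hx _]]; exists x.
have [L tail_lt] := lp_tail_lt (powR_gt0 p e_gt0) (lp_memB hx.1 lpz).
pose x' m := if (m < L)%N then z m else x m.
have x'x m : (L <= m)%N -> x' m = x m by rewrite /x' ltnNge => ->.
have lpx' : lp x' := lp_mem_eq_from x'x hx.1.
exists x'; split.
  exact: (s_hypercyclic_vector_pseudo_shift_eq_from (Ordinal N_gt0) p_ge1 x'x hx).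
rewrite lp_dist_ltE //; apply: le_lt_trans tail_lt.
have x'zE m : (L <= m)%N -> x' m - z m = x m - z m by move=> /x'x ->.
have := lp_lim_eq_from x'zE (lp_memB hx.1 lpz).
by rewrite lp_psum_eq0 ?add0r // => m mL; rewrite /x' mL subrr.
Qed.

End PseudoShifts.
End LpSequences.

Theorem corollary3p4 (R : realType) (p : R) (N : nat) :
  1 <= p -> (2 <= N)%N ->
  (* K = R *)
  (forall (f : 'I_N -> nat -> nat) (w : 'I_N -> nat -> R),
     (forall i, pseudo_shift_data (fun x : R => `|x|) (f i) (w i)) ->
     let T := fun i => pseudo_shift (f i) (w i) in
     s_hypercyclic (fun x : R => `|x|) p T <-> densely_s_hypercyclic (fun x : R => `|x|) p T) /\
  (* K = C *)
  (forall (f : 'I_N -> nat -> nat) (w : 'I_N -> nat -> R[i]),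
     (forall i, pseudo_shift_data (@cmod R) (f i) (w i)) ->
     let T := fun i => pseudo_shift (f i) (w i) in
     s_hypercyclic (@cmod R) p T <-> densely_s_hypercyclic (@cmod R) p T).
Proof.
move=> p_ge1 N_ge2; have p_gt0 : 0 < p := lt_le_trans ltr01 p_ge1.
have N_gt0 : (0 < N)%N := ltnW N_ge2.
split=> f w shift_data T.
  apply: s_hypercyclic_pseudo_shiftsP => //.
  - exact: normr0.
  - exact: ler_normD.
  - exact: normrN.
  - exact: normrM.
  - by move=> r r_ge0; exists r; rewrite ger0_norm.
apply: s_hypercyclic_pseudo_shiftsP => //.
- by move=> [a b]; rewrite /cmod /ComplexField.Normc.normc sqrtr_ge0.
- exact: ComplexField.Normc.normc0.
- exact: le_normcD.
- exact: normcN.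
- exact: ComplexField.Normc.normcM.
- move=> r r_ge0; exists r%:C%C.
  by rewrite /cmod /ComplexField.Normc.normc /= expr0n addr0 sqrtr_sqr ger0_norm.
Qed.
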